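(* Let $h:\{0,1\}^t\times\{0,1\}^t\to\{0,1\}$ be a Boolean function, and let $G$ be the graph with vertex set $V=h^{-1}(0)$ in which distinct $(x,y),(x',y')\in V$ are adjacent iff $h(x,y')=1$ or $h(x',y)=1$. Then $\chi(G)\ge\mathrm{Cov}_0(h)$. Moreover, if $h^{-1}(1)=\bigsqcup_{i=1}^m A_i\times B_i$ is a partition into $1$-monochromatic rectangles, then the bicliques $Q_i=S_i^-\times S_i^+$, where $S_i^-=\{(x,y)\in V: x\in A_i\}$ and $S_i^+=\{(x,y)\in V:y\in B_i\}$, are subgraphs of $G$ and every edge of $G$ belongs to at least one and at most two of $Q_1,\dots,Q_m$.
   Context: A $b$-monochromatic rectangle for $h$ is a set $A\times B$ with $A,B\subseteq\{0,1\}^t$ on which $h\equiv b$; $\mathrm{Cov}_0(h)$ is the minimum number of $0$-monochromatic rectangles whose union is $h^{-1}(0)$. A biclique $S^-\times S^+$ denotes the complete bipartite graph with all edges between $u\in S^-$ and $v\in S^+$. $\chi(G)$ is the chromatic number. *)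

From mathcomp Require Import all_boot.
Set Implicit Arguments. Unset Strict Implicit. Unset Printing Implicit Defensive.

Notation cube t := {ffun 'I_t -> bool}.

Section Defs.
Variable t : nat.
Variable h : cube t -> cube t -> bool.

Definition Vset : {set cube t * cube t} := [set p | ~~ h p.1 p.2].

Definition adjG (u v : cube t * cube t) : bool :=
  [&& u \in Vset, v \in Vset, u != v & h u.1 v.2 || h v.1 u.2].

Definition colorable (k : nat) : bool :=
  [exists f : {ffun cube t * cube t -> 'I_k},
     [forall u, forall v, adjG u v ==> (f u != f v)]].

(* chromatic number: least k admitting a proper colouring
   (#|V| colours always suffice, so the default is never binding) *)
Definition chiG : nat :=
  \big[minn/#|Vset|]_(k < #|Vset|.+1 | colorable k) k.

Definition mono0 (A B : {set cube t}) : bool :=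
  [forall x in A, forall y in B, ~~ h x y].

Definition cover0 (k : nat) : bool :=
  [exists R : {ffun 'I_k -> {set cube t} * {set cube t}},
     [forall i, mono0 (R i).1 (R i).2] &&
     [forall x, forall y, ~~ h x y ==> [exists i, (x \in (R i).1) && (y \in (R i).2)]]].

(* Cov_0(h): least such k (#|V| singleton rectangles always suffice) *)
Definition Cov0 : nat :=
  \big[minn/#|Vset|]_(k < #|Vset|.+1 | cover0 k) k.

Definition Sminus (A : {set cube t}) : {set cube t * cube t} :=
  [set p in Vset | p.1 \in A].
Definition Splus (B : {set cube t}) : {set cube t * cube t} :=
  [set p in Vset | p.2 \in B].

Definition biclique_edge (Sm Sp : {set cube t * cube t}) (u v : cube t * cube t) : bool :=
  (u \in Sm) && (v \in Sp) || (v \in Sm) && (u \in Sp).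

End Defs.

(* A proper colouring f of G yields a 0-cover with one rectangle per colour,
   R_j = {x | f(x,y) = j for some y} x {y | f(x,y) = j for some x}: if (x,y1)
   and (x2,y) both have colour j but h x y = 1, then they are adjacent in G
   (or equal, contradicting h x y1 = 0), which properness forbids.

   For the bicliques, an edge u v of G lies in Q_i exactly when u.1 in A_i and
   v.2 in B_i, or v.1 in A_i and u.2 in B_i.  Adjacency says one of the points
   (u.1,v.2), (v.1,u.2) lies in h^{-1}(1), hence in some rectangle, and by
   disjointness each of the two points lies in at most one rectangle. *)

From mathcomp Require Import all_boot.

Set Implicit Arguments.
Unset Strict Implicit.
Unset Printing Implicit Defensive.

Section BigMinn.
Variables (I : eqType) (r : seq I) (P : pred I) (F : I -> nat) (d : nat).

Lemma bigminn_le j : j \in r -> P j -> \big[minn/d]_(i <- r | P i) F i <= F j.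
Proof.
elim: r => // a s IHs; rewrite inE big_cons => /orP [/eqP <- -> | sj Pj].
  exact: geq_minl.
by case: (P a); rewrite ?geq_min IHs ?orbT.
Qed.

Lemma leq_bigminn m :
  m <= d -> (forall i, P i -> m <= F i) -> m <= \big[minn/d]_(i <- r | P i) F i.
Proof. by move=> le_md le_mF; elim/big_ind: _ => // a b Ha Hb; rewrite leq_min Ha. Qed.

End BigMinn.

Lemma bigminn_ord_le n (P : pred 'I_n.+1) : \big[minn/n]_(i < n.+1 | P i) i <= n.
Proof.
elim/big_ind: _ => // [a b le_an _ | i _]; first by rewrite geq_min le_an.
by rewrite -ltnS.
Qed.

Section ChromaticBound.
Variables (t : nat) (h : cube t -> cube t -> bool).

Definition colour_rect k (f : {ffun cube t * cube t -> 'I_k}) (j : 'I_k) :=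
  ([set x | [exists y, ((x, y) \in Vset h) && (f (x, y) == j)]],
   [set y | [exists x, ((x, y) \in Vset h) && (f (x, y) == j)]]).

Definition proper_colouring k (f : {ffun cube t * cube t -> 'I_k}) :=
  [forall u, forall v, adjG h u v ==> (f u != f v)].

Lemma colour_rect_mono0 k (f : {ffun cube t * cube t -> 'I_k}) j :
  proper_colouring f -> mono0 h (colour_rect f j).1 (colour_rect f j).2.
Proof.
move=> /forallP f_proper; apply/forall_inP=> x; rewrite inE.
case/existsP=> y1 /andP [V1 /eqP f1]; apply/forall_inP=> y; rewrite inE.
case/existsP=> x2 /andP [V2 /eqP f2]; apply/negP=> hxy.
have [[_ eq_y1] | neq] := eqVneq (x, y1) (x2, y).
  by move: V1; rewrite inE eq_y1 hxy.
have adj : adjG h (x, y1) (x2, y) by rewrite /adjG V1 V2 neq hxy.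
by move: (f_proper (x, y1)) => /forallP /(_ (x2, y)); rewrite adj f1 f2 eqxx.
Qed.

Lemma colour_rect_cover k (f : {ffun cube t * cube t -> 'I_k}) x y :
  ~~ h x y -> (x \in (colour_rect f (f (x, y))).1) && (y \in (colour_rect f (f (x, y))).2).
Proof.
move=> hxy; have V : (x, y) \in Vset h by rewrite inE.
by rewrite !inE; apply/andP; split; apply/existsP; [exists y | exists x]; rewrite V eqxx.
Qed.

Lemma colorable_cover0 k : colorable h k -> cover0 h k.
Proof.
case/existsP=> f f_proper; apply/existsP; exists [ffun j => colour_rect f j].
apply/andP; split.
  by apply/forallP=> j; rewrite ffunE; apply: colour_rect_mono0.
apply/forallP=> x; apply/forallP=> y; apply/implyP=> hxy.
by apply/existsP; exists (f (x, y)); rewrite ffunE colour_rect_cover.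
Qed.

Lemma Cov0_le_chiG : Cov0 h <= chiG h.
Proof.
apply: leq_bigminn => [|k col_k]; first exact: bigminn_ord_le.
by apply: bigminn_le (mem_index_enum _) _; apply: colorable_cover0.
Qed.

End ChromaticBound.

Section RectanglePartition.
Variables (t : nat) (h : cube t -> cube t -> bool).
Variables (m : nat) (A B : 'I_m -> {set cube t}).

Lemma biclique_edgeE (S T : {set cube t}) u v :
  u \in Vset h -> v \in Vset h ->
  biclique_edge (Sminus h S) (Splus h T) u v =
  (u.1 \in S) && (v.2 \in T) || (v.1 \in S) && (u.2 \in T).
Proof. by rewrite /biclique_edge !inE => -> ->. Qed.

Lemma biclique_edge_adjG (S T : {set cube t}) u v :
  (forall x y, x \in S -> y \in T -> h x y) ->
  biclique_edge (Sminus h S) (Splus h T) u v -> adjG h u v.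
Proof.
case: u v => [u1 u2] [v1 v2] h1_ST; rewrite /biclique_edge /adjG !inE /=.
case/orP=> /andP [/andP [Vu Su] /andP [Vv Tv]]; have h1 := h1_ST _ _ Su Tv;
  rewrite Vu Vv h1 ?orbT andbT; apply/eqP=> -[_ eq2].
- by move: Vu; rewrite eq2 h1.
- by move: Vu; rewrite -eq2 h1.
Qed.

Hypothesis disjoint_rects :
  forall i j x y, x \in A i -> y \in B i -> x \in A j -> y \in B j -> i = j.

Lemma card_rects_at_le1 x y : #|[set i | (x \in A i) && (y \in B i)]| <= 1.
Proof.
apply/card_le1_eqP=> i j; rewrite !inE => /andP [Ai Bi] /andP [Aj Bj].
exact: disjoint_rects Aj Bj Ai Bi.
Qed.

Lemma card_bicliques_at_edge_le2 u v :
  u \in Vset h -> v \in Vset h ->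
  #|[set i | biclique_edge (Sminus h (A i)) (Splus h (B i)) u v]| <= 2.
Proof.
move=> Vu Vv.
have -> : [set i | biclique_edge (Sminus h (A i)) (Splus h (B i)) u v] =
          [set i | (u.1 \in A i) && (v.2 \in B i)] :|: [set i | (v.1 \in A i) && (u.2 \in B i)].
  by apply/setP=> i; rewrite !inE biclique_edgeE.
apply: leq_trans (leq_card_setU _ _).1 _.
by rewrite -[2]/(1 + 1) leq_add ?card_rects_at_le1.
Qed.

End RectanglePartition.

Theorem mainTheorem11 (t : nat) (h : cube t -> cube t -> bool) :
  Cov0 h <= chiG h /\
  (forall (m : nat) (A B : 'I_m -> {set cube t}),
     (* h^{-1}(1) is the union of the rectangles A_i x B_i ... *)
     (forall x y, h x y = true <-> exists i, x \in A i /\ y \in B i) ->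
     (* ... and the union is disjoint *)
     (forall i j x y, x \in A i -> y \in B i -> x \in A j -> y \in B j -> i = j) ->
     (* each Q_i is a subgraph of G *)
     (forall i u v, biclique_edge (Sminus h (A i)) (Splus h (B i)) u v -> adjG h u v) /\
     (* every edge lies in at least one and at most two Q_i *)
     (forall u v, adjG h u v ->
        0 < #|[set i | biclique_edge (Sminus h (A i)) (Splus h (B i)) u v]| <= 2)).
Proof.
split; first exact: Cov0_le_chiG.
move=> m A B h1E disjointAB; split.
  move=> i u v; apply: biclique_edge_adjG => x y Ax By.
  by apply/h1E; exists i.
move=> u v adj_uv; have /and4P [Vu Vv _ h_uv] := adj_uv.
rewrite card_bicliques_at_edge_le2 // andbT.
apply/card_gt0P; case/orP: h_uv => /h1E [i [Ai Bi]]; exists i;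
  by rewrite inE biclique_edgeE // Ai Bi ?orbT.
Qed.
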